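(* Let $\mathbf K$ be a commutative field, $p,q\in\mathbb N$, $A\in\mathbf K^{\mathcal M_{p\times q}}$, and $\mathcal A=\overline{A}^{rec}$. Then $$\dim\big(\overline{A}^{birec}\big)=\dim\big(\mathbf K[\rho_{\mathcal A}(\mathcal M_{p\times q})]\big),$$ where $\mathbf K[\rho_{\mathcal A}(\mathcal M_{p\times q})]\subset\mathrm{End}(\mathcal A)$ is the subalgebra generated by the restrictions to $\mathcal A$ of all shift maps. In particular $$\dim\big(\overline{A}^{rec}\big)\le\dim\big(\overline{A}^{birec}\big)\le\big(\dim\overline{A}^{rec}\big)^2$$ (dimensions in $\mathbb N\cup\{\infty\}$).
   Context: $\mathcal M_{p\times q}$ is the monoid of pairs $(U,W)$ of words of common length with $U$ over $\{0,\dots,p-1\}$ and $W$ over $\{0,\dots,q-1\}$, under concatenation. For $A:\mathcal M_{p\times q}\to\mathbf K$ (values $A[U,W]$), the (right) shift map is $(\rho(S,T)A)[U,W]=A[US,WT]$ and the left shift map is $(\lambda(s_1\dots s_n,t_1\dots t_n)A)[U,W]=A[s_n\dots s_1U,t_n\dots t_1W]$. The recursive closure $\overline{A}^{rec}$ is the linear span of $\{\rho(S,T)A\}$ (invariant under all shift maps), and the birecursive closure $\overline{A}^{birec}$ is the linear span of $\{\lambda(S',T')\rho(S,T)A:(S,T),(S',T')\in\mathcal M_{p\times q}\}$. *)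

From mathcomp Require Import all_boot all_order all_algebra.
Set Implicit Arguments. Unset Strict Implicit. Unset Printing Implicit Defensive.
Import GRing.Theory.
Local Open Scope ring_scope.

(* The monoid M_{p x q}: pairs (U,W) of words of common length. *)
Definition word2 (p q : nat) : Type :=
  {x : seq 'I_p * seq 'I_q | size x.1 == size x.2}.

Lemma wcat_proof p q (x y : word2 p q) :
  size ((sval x).1 ++ (sval y).1) == size ((sval x).2 ++ (sval y).2).
Proof.
by case: x => [[a b] /= /eqP Hx]; case: y => [[c d] /= /eqP Hy];
   rewrite !size_cat Hx Hy.
Qed.

Definition wcat p q (x y : word2 p q) : word2 p q :=
  exist _ ((sval x).1 ++ (sval y).1, (sval x).2 ++ (sval y).2) (wcat_proof x y).

Lemma wrev_proof p q (x : word2 p q) :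
  size (rev (sval x).1) == size (rev (sval x).2).
Proof. by case: x => [[a b] /= H]; rewrite !size_rev. Qed.

Definition wrev p q (x : word2 p q) : word2 p q :=
  exist _ (rev (sval x).1, rev (sval x).2) (wrev_proof x).

Definition series (K : fieldType) p q := word2 p q -> K.

Definition rho (K : fieldType) p q (w : word2 p q) (A : series K p q)
  : series K p q := fun u => A (wcat u w).

Definition lambda (K : fieldType) p q (w : word2 p q) (A : series K p q)
  : series K p q := fun u => A (wcat (wrev w) u).

(* Linear algebra in the K-vector space of all functions X -> K
   (pointwise operations). A "subspace" is given as a predicate. *)
Definition lincomb (K : fieldType) (X : Type) n (c : 'I_n -> K)
  (b : 'I_n -> X -> K) : X -> K := fun x => \sum_(i < n) c i * b i x.

Definition span (K : fieldType) (X : Type) (G : (X -> K) -> Prop)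
  : (X -> K) -> Prop :=
  fun v => exists n (c : 'I_n -> K) (b : 'I_n -> X -> K),
    (forall i, G (b i)) /\ v = lincomb c b.

(* [has_dim n V]: the subspace V has a basis of n elements, i.e. dim V = n.
   dim V = infinity iff has_dim n V holds for no n. *)
Definition has_dim (K : fieldType) (X : Type) (n : nat)
  (V : (X -> K) -> Prop) : Prop :=
  exists b : 'I_n -> X -> K,
    [/\ forall i, V (b i),
        (forall c : 'I_n -> K, lincomb c b = (fun _ => 0) -> forall i, c i = 0)
      & forall v, V v -> exists c : 'I_n -> K, v = lincomb c b].

Definition rec_closure (K : fieldType) p q (A : series K p q) : series K p q -> Prop :=
  span (fun f => exists w, f = rho w A).

Definition birec_closure (K : fieldType) p q (A : series K p q) : series K p q -> Prop :=
  span (fun f => exists w w', f = lambda w' (rho w A)).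

Definition recElt (K : fieldType) p q (A : series K p q) : Type :=
  {f : series K p q | rec_closure A f}.

(* A K-linear map calA -> calA is represented by its graph as a function
   calA -> series (values lie in calA for all maps considered below);
   uncurried, it is a function  recElt A * word2 p q -> K, so End(calA)
   sits inside the function space (recElt A * word2 p q) -> K. *)
(* The restriction to calA of the composite rho(w_1) o ... o rho(w_k)
   (empty list = identity of calA). *)
Definition rho_mono (K : fieldType) p q (A : series K p q) (ws : seq (word2 p q))
  : recElt A * word2 p q -> K :=
  fun au => foldr (@rho K p q) (sval au.1) ws au.2.
Arguments rho_mono {K p q} A ws _.

(* K[rho_calA(M_{p x q})]: the subalgebra of End(calA) generated by the
   restrictions of all shift maps = span of all finite products of them. *)
Definition shift_algebra (K : fieldType) p q (A : series K p q)
  : (recElt A * word2 p q -> K) -> Prop :=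
  span (fun g => exists ws, g = rho_mono A ws).

Arguments shift_algebra {K p q} A _.

(* Consider the array H(w, (a, u)) = a (u w), for words w, u and a in the
   recursive closure calA of A.  Its rows are the graphs of the restrictions
   rho_calA(w); since rho(w1) o ... o rho(wk) = rho(w1 ... wk), they span
   K[rho_calA(M)].  Its columns w |-> a (u w) span the birecursive closure,
   lambda w' (rho w A) being the column of (rho w A, rev w').  Row rank equals
   column rank, hence the equality of dimensions.  The recursive closure lies
   in the birecursive one, and for a basis b_1, ..., b_m of calA every
   lambda w' (rho w A) is a combination of the m^2 coefficient functions
   u |-> (coefficient of b_j in rho u b_i). *)

From Pilot Require Import Defs.
From mathcomp Require Import all_boot all_order all_algebra.
From Stdlib Require Import FunctionalExtensionality Classical ClassicalEpsilon.
Set Implicit Arguments. Unset Strict Implicit. Unset Printing Implicit Defensive.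
Import GRing.Theory.
Local Open Scope ring_scope.

Section FunctionSpan.
Variables (K : fieldType) (X : Type).
Implicit Types (G : (X -> K) -> Prop) (v : X -> K).

Definition indep n (b : 'I_n -> X -> K) :=
  forall c : 'I_n -> K, lincomb c b = (fun _ => 0) -> forall i, c i = 0.

Definition in_span n (b : 'I_n -> X -> K) v := exists c, v = lincomb c b.

Lemma span_gen G v : G v -> Defs.span G v.
Proof.
move=> Gv; exists 1%N, (fun _ => 1), (fun _ => v); split => //.
by apply: functional_extensionality => x; rewrite /lincomb big_ord1 mul1r.
Qed.

Lemma in_span_lincomb m n (f : 'I_m -> X -> K) (b : 'I_n -> X -> K) c :
  (forall i, in_span f (b i)) -> in_span f (lincomb c b).
Proof.
move=> /choice [d bE]; exists (fun j => \sum_(i < n) c i * d i j).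
apply: functional_extensionality => x; rewrite /lincomb.
under eq_bigr => i _ do rewrite bE /lincomb big_distrr.
rewrite exchange_big; apply: eq_bigr => j _; rewrite big_distrl.
by apply: eq_bigr => i _; exact: mulrA.
Qed.

Lemma in_span_enum (T : finType) (f : T -> X -> K) (c : T -> K) :
  in_span (fun k : 'I_#|T| => f (enum_val k)) (fun x => \sum_t c t * f t x).
Proof.
exists (fun k => c (enum_val k)); apply: functional_extensionality => x.
by rewrite /lincomb (big_enum_val (A := T) (fun t => c t * f t x)).
Qed.

Lemma in_span_span m (f : 'I_m -> X -> K) G v :
  (forall g, G g -> in_span f g) -> Defs.span G v -> in_span f v.
Proof. by move=> Gf [n [c [b [Gb ->]]]]; apply: in_span_lincomb => i; apply: Gf. Qed.

(* Steinitz: for n > m the n x m coefficient matrix has a nonzero left kernel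
   vector, i.e. a nontrivial relation among the b i. *)
Lemma indep_leq n m (b : 'I_n -> X -> K) (f : 'I_m -> X -> K) :
  indep b -> (forall i, in_span f (b i)) -> (n <= m)%N.
Proof.
move=> b_indep /choice [C bE]; rewrite leqNgt; apply/negP => ltmn.
pose M : 'M[K]_(n, m) := \matrix_(i, j) C i j.
have : kermx M != 0.
  rewrite kermx_eq0; apply: contraL ltmn => /eqP <-.
  by rewrite -leqNgt rank_leq_col.
case/rowV0Pn => u /sub_kermxP uM; apply/negP; rewrite negbK.
have rel : lincomb (fun i => u 0 i) b = (fun _ => 0).
  apply: functional_extensionality => x; rewrite /lincomb.
  under eq_bigr => i _ do rewrite bE /lincomb big_distrr.
  rewrite exchange_big; apply: big1 => j _.
  transitivity ((u *m M) 0 j * f j x); last by rewrite uM mxE mul0r.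
  by rewrite mxE big_distrl; apply: eq_bigr => i _; rewrite mxE; exact: mulrA.
by apply/eqP/rowP => i; rewrite mxE (b_indep _ rel).
Qed.

Definition extend k (b : 'I_k -> X -> K) v (i : 'I_k.+1) : X -> K :=
  if unlift ord_max i is Some j then b j else v.

Lemma widen_ord_lift k (i : 'I_k) : widen_ord (leqnSn k) i = lift ord_max i.
Proof. by apply: ord_inj; rewrite lift_max. Qed.

Lemma extend_widen k (b : 'I_k -> X -> K) v i :
  extend b v (widen_ord (leqnSn k) i) = b i.
Proof. by rewrite /extend widen_ord_lift liftK. Qed.

Lemma extend_max k (b : 'I_k -> X -> K) v : extend b v ord_max = v.
Proof. by rewrite /extend unlift_none. Qed.

Lemma indep_extend k (b : 'I_k -> X -> K) v :
  indep b -> ~ in_span b v -> indep (extend b v).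
Proof.
move=> b_indep v_out c rel.
pose c' i := c (widen_ord (leqnSn k) i).
have relx x : \sum_(i < k) c' i * b i x + c ord_max * v x = 0.
  have := congr1 (fun h => h x) rel; rewrite /lincomb /= big_ord_recr /= extend_max.
  by under eq_bigr => i _ do rewrite extend_widen.
have cmax0 : c ord_max = 0.
  have [//|cmax_neq0] := eqVneq (c ord_max) 0; case: v_out.
  exists (fun i => - c' i / c ord_max); apply: functional_extensionality => x.
  have sumx : \sum_(i < k) c' i * b i x = - (c ord_max * v x).
    by apply/eqP; rewrite -addr_eq0 relx.
  rewrite /lincomb; under eq_bigr => i _ do rewrite mulrAC mulNr.
  by rewrite -big_distrl sumrN /= sumx opprK mulrAC mulfV ?mul1r.
have c'0 : lincomb c' b = (fun _ => 0).
  by apply: functional_extensionality => x; have := relx x; rewrite cmax0 mul0r addr0.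
move=> i; case: (unliftP ord_max i) => [j ->|->] //.
by rewrite -widen_ord_lift; apply: b_indep c'0 j.
Qed.

(* A maximal independent subfamily of G is a basis of its span; it exists
   because independent families inside the span of m vectors have size <= m. *)
Lemma has_dim_span_leq m (f : 'I_m -> X -> K) G :
  (forall g, G g -> in_span f g) ->
  exists n, (n <= m)%N /\ has_dim n (Defs.span G).
Proof.
move=> Gf; apply: NNPP => no_basis.
have grow k : exists b : 'I_k -> X -> K, (forall i, G (b i)) /\ indep b.
  elim: k => [|k [b [Gb b_indep]]]; first by exists (fun _ _ => 0); split => [|c _]; case.
  have [g g_new] : exists g, ~ (G g -> in_span b g).
    apply: not_all_ex_not => b_spans; apply: no_basis; exists k; split.
      by apply: (indep_leq b_indep) => i; apply: Gf.
    by exists b; split=> // [i | v]; [exact: span_gen | exact: in_span_span].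
  have [Gg g_out] := imply_to_and _ _ g_new.
  exists (extend b g); split; last exact: indep_extend.
  by move=> i; rewrite /extend; case: (unlift _ i).
have [b [Gb b_indep]] := grow m.+1.
by have := indep_leq b_indep (fun i => Gf _ (Gb i)); rewrite ltnn.
Qed.

Lemma has_dim_subspan n (V : (X -> K) -> Prop) G :
  has_dim n V -> (forall g, G g -> V g) ->
  exists m, (m <= n)%N /\ has_dim m (Defs.span G).
Proof. by move=> [b [_ _ Vb]] GV; apply: (has_dim_span_leq (f := b)) => g /GV /Vb. Qed.

Lemma has_dim_uniq (V : (X -> K) -> Prop) n m :
  has_dim n V -> has_dim m V -> n = m.
Proof.
move=> [b [Vb b_indep b_span]] [b' [Vb' b'_indep b'_span]].
apply/eqP; rewrite eqn_leq (indep_leq b_indep (fun i => b'_span _ (Vb i))).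
exact: (indep_leq b'_indep (fun i => b_span _ (Vb' i))).
Qed.

Lemma has_dim_leq_antisym (Y : Type) (V : (X -> K) -> Prop) (V' : (Y -> K) -> Prop) n :
  (forall k, has_dim k V -> exists m, (m <= k)%N /\ has_dim m V') ->
  (forall k, has_dim k V' -> exists m, (m <= k)%N /\ has_dim m V) ->
  has_dim n V -> has_dim n V'.
Proof.
move=> VV' V'V dimV; have [m [lemn dimV']] := VV' n dimV.
have [m' [lem'm dimV'']] := V'V m dimV'.
suff -> : n = m by [].
by apply/eqP; rewrite eqn_leq lemn -(has_dim_uniq dimV'' dimV) lem'm.
Qed.

Lemma has_dim_span_eq n G G' :
  (forall g, G g -> Defs.span G' g) -> (forall g, G' g -> Defs.span G g) ->
  has_dim n (Defs.span G) <-> has_dim n (Defs.span G').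
Proof.
by move=> GG' G'G; split; apply: has_dim_leq_antisym => k /has_dim_subspan; apply.
Qed.

End FunctionSpan.

Lemma has_dim_cols_leq (K : fieldType) (I J : Type) (F : I -> J -> K) n :
  has_dim n (Defs.span (fun f => exists i, f = F i)) ->
  exists m, (m <= n)%N /\ has_dim m (Defs.span (fun g => exists j, g = fun i => F i j)).
Proof.
move=> [b [_ _ b_span]].
have [C FE] : exists C : I -> 'I_n -> K, forall i, F i = lincomb (C i) b.
  apply: (choice (fun i c => F i = lincomb c b)) => i.
  by apply: b_span; apply: span_gen; exists i.
apply: (has_dim_span_leq (f := fun k i => C i k)) => _ [j ->].
exists (fun k => b k j); apply: functional_extensionality => i.
by rewrite FE /lincomb; apply: eq_bigr => k _; apply: mulrC.
Qed.

Lemma has_dim_rows_cols (K : fieldType) (I J : Type) (F : I -> J -> K) n :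
  has_dim n (Defs.span (fun f => exists i, f = F i)) <->
  has_dim n (Defs.span (fun g => exists j, g = fun i => F i j)).
Proof.
have rows_cols := @has_dim_cols_leq K I J F.
have cols_rows := @has_dim_cols_leq K J I (fun j i => F i j).
by split; apply: has_dim_leq_antisym.
Qed.

Section Words.
Variables p q : nat.
Implicit Types x y z : word2 p q.

Definition wnil : word2 p q := exist _ ([::], [::]) isT.

Lemma wcatA x y z : wcat (wcat x y) z = wcat x (wcat y z).
Proof. by apply: val_inj; rewrite /= !catA. Qed.

Lemma wcatw0 x : wcat x wnil = x.
Proof. by case: x => [[a b] ?]; apply: val_inj; rewrite /= !cats0. Qed.

Lemma wcat0w x : wcat wnil x = x.
Proof. by case: x => [[a b] ?]; apply: val_inj. Qed.

Lemma wrevK x : wrev (wrev x) = x.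
Proof. by case: x => [[a b] ?]; apply: val_inj; rewrite /= !revK. Qed.

Lemma wrev0 : wrev wnil = wnil.
Proof. exact: val_inj. Qed.

Definition wflatten (ws : seq (word2 p q)) : word2 p q := foldr (@wcat p q) wnil ws.

Lemma foldr_rhoE (K : fieldType) (a : series K p q) ws x :
  foldr (@rho K p q) a ws x = a (wcat x (wflatten ws)).
Proof.
elim: ws x => [|w ws IH] x /=; first by rewrite wcatw0.
by rewrite /rho IH wcatA.
Qed.

Lemma rec_closure_rho (K : fieldType) (A : series K p q) x a :
  rec_closure A a -> rec_closure A (rho x a).
Proof.
move=> [n [c [b [rec_b ->]]]]; exists n, c, (fun i => rho x (b i)); split => // i.
have [y ->] := rec_b i; exists (wcat x y).
by apply: functional_extensionality => z; rewrite /rho wcatA.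
Qed.

End Words.

Section ShiftAlgebra.
Variables (K : fieldType) (p q : nat) (A : series K p q).
Local Notation W := (word2 p q).

Lemma birec_closure_cols n :
  has_dim n (birec_closure A) <->
  has_dim n (Defs.span (fun g => exists au, g = fun w => rho_mono A [:: w] au)).
Proof.
apply: has_dim_span_eq => g.
- move=> [w [w' ->]]; apply: span_gen.
  have rec_rhoA : rec_closure A (rho w A) by apply: span_gen; exists w.
  by exists (exist _ (rho w A) rec_rhoA, wrev w').
- move=> [[[a rec_a] u] ->]; rewrite /rho_mono /=.
  have [m [c [b [rec_b ->]]]] := rec_a.
  exists m, c, (fun i w => b i (wcat u w)); split => // i.
  have [x ->] := rec_b i; exists x, (wrev u).
  by apply: functional_extensionality => w; rewrite /lambda /rho wrevK.
Qed.

Lemma shift_algebra_rows n :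
  has_dim n (Defs.span (fun f => exists w, f = rho_mono A [:: w])) <->
  has_dim n (shift_algebra A).
Proof.
apply: has_dim_span_eq => g.
- by move=> [w ->]; apply: span_gen; exists [:: w].
- move=> [ws ->]; apply: span_gen; exists (wflatten ws).
  by apply: functional_extensionality => au; rewrite /rho_mono foldr_rhoE.
Qed.

Lemma has_dim_rec_leq_birec n :
  has_dim n (birec_closure A) ->
  exists m, (m <= n)%N /\ has_dim m (rec_closure A).
Proof.
move=> dimB; apply: (has_dim_subspan dimB) => _ [w ->]; apply: span_gen.
exists w, (wnil p q).
by apply: functional_extensionality => u; rewrite /lambda wrev0 wcat0w.
Qed.

Lemma has_dim_birec_leq_sqr m :
  has_dim m (rec_closure A) ->
  exists n, (n <= m ^ 2)%N /\ has_dim n (birec_closure A).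
Proof.
move=> [b [rec_b _ b_span]].
have [C rhoE] : exists C : W -> 'I_m -> 'I_m -> K,
    forall u i, rho u (b i) = lincomb (C u i) b.
  apply: (choice (fun u Cu => forall i, rho u (b i) = lincomb (Cu i) b)) => u.
  apply: (choice (fun i c => rho u (b i) = lincomb c b)) => i.
  exact/b_span/rec_closure_rho.
pose coef (ij : 'I_m * 'I_m) (u : W) := C u ij.1 ij.2.
have [n [le_n_card dimB]] :
    exists n, (n <= #|{: 'I_m * 'I_m}|)%N /\ has_dim n (birec_closure A).
  apply: (has_dim_span_leq (f := fun k => coef (enum_val k))) => _ [w [w' ->]].
  have [e rhoAE] := b_span _ (span_gen (ex_intro _ w erefl)).
  suff -> : lambda w' (rho w A) =
      fun u => \sum_ij (e ij.1 * b ij.2 (wrev w')) * coef ij u by apply: in_span_enum.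
  apply: functional_extensionality => u; rewrite /lambda rhoAE /lincomb /coef.
  rewrite -(pair_bigA _ (fun i j => e i * b j (wrev w') * C u i j)) /=.
  apply: eq_bigr => i _.
  have := congr1 (fun h => h (wrev w')) (rhoE u i); rewrite /rho /lincomb /= => ->.
  by rewrite big_distrr; apply: eq_bigr => j _; rewrite -mulrA [_ * C u i j]mulrC.
by exists n; split => //; rewrite -mulnn -{1 2}(card_ord m) -card_prod.
Qed.

End ShiftAlgebra.

Theorem mainTheorem14 (K : fieldType) (p q : nat) (A : series K p q) :
  (* dim birec(A) = dim K[rho_calA(M)]  (in N u {oo}) *)
  (forall n : nat, has_dim n (birec_closure A) <-> has_dim n (shift_algebra A))
  (* dim rec(A) <= dim birec(A) *)
  /\ (forall n : nat, has_dim n (birec_closure A) ->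
        exists m : nat, (m <= n)%N /\ has_dim m (rec_closure A))
  (* dim birec(A) <= (dim rec(A))^2 *)
  /\ (forall m : nat, has_dim m (rec_closure A) ->
        exists n : nat, (n <= m ^ 2)%N /\ has_dim n (birec_closure A)).
Proof.
split; last split.
- move=> n; rewrite birec_closure_cols -shift_algebra_rows.
  exact: iff_sym (has_dim_rows_cols (fun w => rho_mono A [:: w]) n).
- exact: has_dim_rec_leq_birec.
- exact: has_dim_birec_leq_sqr.
Qed.
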